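(* Let $\delta>0$ and $k,l\in\mathbb{N}$. Then there exists $n_0\in\mathbb{N}$ such that for every $n\ge n_0$ and every subset $\mathcal{A}$ of $[\{1,\dots,n\}]^k$ with $|\mathcal{A}|\ge\delta\binom{n}{k}$, there exists a plegma family $(s_j)_{j=1}^l$ in $[\mathbb{N}]^k$ with $s_j\in\mathcal{A}$ for every $1\le j\le l$.
   Context: $[A]^k$ is the set of $k$-element subsets of $A$, each identified with its increasing enumeration $s(1)<\dots<s(k)$. A finite sequence $(s_j)_{j=1}^l$ in $[\mathbb{N}]^k$ is a plegma family if $s_1(i)<s_2(i)<\dots<s_l(i)$ for every $1\le i\le k$ and $s_l(i)<s_1(i+1)$ for every $1\le i<k$. *)

From Stdlib Require Import Reals.
From mathcomp Require Import all_boot.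
Set Implicit Arguments. Unset Strict Implicit. Unset Printing Implicit Defensive.

(* Increasing enumeration s(1) < ... < s(k) of a finite set of naturals,
   given as a set of ordinals; s(i) is [nth 0 (incr S) (i-1)]. *)
Definition incr (m : nat) (S : {set 'I_m}) : seq nat :=
  sort leq (map (@nat_of_ord m) (enum S)).

(* A finite sequence f = (s_1,...,s_l) of increasing enumerations of
   k-element subsets of N is a plegma family (0-based indices here):
   - each s_j is a strictly increasing sequence of length k;
   - s_1(i) < s_2(i) < ... < s_l(i) for every i;
   - s_l(i) < s_1(i+1) for every i < k. *)
Definition plegma (k : nat) (f : seq (seq nat)) : Prop :=
  (forall s, s \in f -> size s = k /\ sorted ltn s) /\
  (forall i j, i < k -> j.+1 < size f ->
     nth 0 (nth [::] f j) i < nth 0 (nth [::] f j.+1) i) /\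
  (forall i, i.+1 < k -> 0 < size f ->
     nth 0 (nth [::] f (size f).-1) i < nth 0 (nth [::] f 0) i.+1).

From Stdlib Require Import Reals.
From mathcomp Require Import all_boot zify.
Set Implicit Arguments. Unset Strict Implicit. Unset Printing Implicit Defensive.

(* We argue by induction on the size k+1 of the sets, proving a quantitative
   statement about families A of (k+1)-subsets of an interval I of length n
   with at least W^k n / D members, where the scale W stays fixed with
   n <= W <= D n.  Let B be the initial segment of I of length m = 2Dl.
   If few members of A meet B, those avoiding B form a family of the same kind
   on I \ B, and we recurse on this shorter interval.  Otherwise, for many
   k-sets t the link {h in B | h < min t and {h} u t in A} has at least l
   elements; by pigeonhole many such t share the same link H.  The induction
   hypothesis yields a plegma family t_1, ..., t_l among them, and adding the
   l smallest elements of H, in increasing order, to t_1, ..., t_l gives a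
   plegma family in A. *)

Lemma mem_incr m (S : {set 'I_m}) x :
  (x \in incr S) = [exists y in S, val y == x].
Proof.
rewrite /incr mem_sort; apply/mapP/existsP => [[y Hy ->]|[y /andP[Hy /eqP <-]]].
  by exists y; rewrite -mem_enum Hy eqxx.
by exists y; rewrite ?mem_enum.
Qed.

Lemma sorted_incr m (S : {set 'I_m}) : sorted ltn (incr S).
Proof.
rewrite ltn_sorted_uniq_leq /incr sort_uniq sort_sorted ?andbT; last exact: leq_total.
by rewrite (map_inj_uniq val_inj) enum_uniq.
Qed.

Lemma size_incr m (S : {set 'I_m}) : size (incr S) = #|S|.
Proof. by rewrite /incr size_sort size_map cardE. Qed.

Lemma incr_set0 m : incr (set0 : {set 'I_m}) = [::].
Proof. by apply: size0nil; rewrite size_incr cards0. Qed.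

Lemma incr_setU1 m (h : 'I_m) (S : {set 'I_m}) :
  (forall y, y \in S -> h < y) -> incr (h |: S) = val h :: incr S.
Proof.
move=> Hh; apply: (irr_sorted_eq ltn_trans ltnn); first exact: sorted_incr.
  rewrite /= path_sortedE; last exact: ltn_trans.
  rewrite sorted_incr andbT; apply/allP => x; rewrite mem_incr.
  by case/exists_inP=> y Hy /eqP <-; apply: Hh.
move=> x; rewrite in_cons !mem_incr; apply/existsP/idP.
  case=> y /andP[]; rewrite in_setU1 => /orP[/eqP ->|Hy] Hx.
    by rewrite eq_sym Hx.
  by apply/orP; right; apply/existsP; exists y; rewrite Hy.
case/orP=> [/eqP ->|/exists_inP[y Hy Hx]].
  by exists h; rewrite setU11 eqxx.
by exists y; rewrite setU1r.
Qed.

Lemma mem_zip (S T : eqType) (s : seq S) (t : seq T) x y :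
  (x, y) \in zip s t -> x \in s /\ y \in t.
Proof.
elim: s t => [|a s IH] [|b t] //=.
rewrite in_cons => /orP[/eqP [-> ->]|/IH [H1 H2]].
  by rewrite !inE !eqxx.
by rewrite !inE H1 H2 !orbT.
Qed.

Lemma plegma0_nseq l : plegma 0 (nseq l [::]).
Proof. by split=> // s; rewrite mem_nseq => /andP[_ /eqP ->]. Qed.

Lemma plegma_zip_cons k (hs : seq nat) (us : seq (seq nat)) :
  plegma k us -> sorted ltn hs -> size hs = size us ->
  (forall h u x, h \in hs -> u \in us -> x \in u -> h < x) ->
  plegma k.+1 [seq p.1 :: p.2 | p <- zip hs us].
Proof.
move=> [P1 [P2 P3]] Shs Hsz Hlt.
have Hsize : size [seq p.1 :: p.2 | p <- zip hs us] = size us.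
  by rewrite size_map size_zip Hsz minnn.
have Hnth j : j < size us ->
    nth [::] [seq p.1 :: p.2 | p <- zip hs us] j = nth 0 hs j :: nth [::] us j.
  by move=> Hj; rewrite (nth_map (0, [::])) ?nth_zip // size_zip Hsz minnn.
split; [|split].
- move=> s /mapP[[h u] /mem_zip [Hh Hu] ->].
  have [Hs1 Hs2] := P1 u Hu; split; first by rewrite /= Hs1.
  rewrite /= path_sortedE; last exact: ltn_trans.
  by rewrite Hs2 andbT; apply/allP => x Hx; apply: Hlt Hh Hu Hx.
- move=> i j Hi; rewrite Hsize => Hj.
  rewrite !Hnth //; last exact: ltnW.
  case: i Hi => [|i] Hi /=; last exact: P2.
  by apply: (sorted_ltn_nth ltn_trans 0 Shs); rewrite ?inE ?Hsz //; apply: ltnW.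
- move=> i Hi; rewrite Hsize => Hpos.
  rewrite !Hnth //; last by rewrite prednK.
  case: i Hi => [|i] Hi /=; last exact: P3.
  have [Hk _] := P1 _ (mem_nth [::] Hpos).
  apply: (Hlt _ (nth [::] us 0)); first by rewrite mem_nth // Hsz prednK.
    exact: mem_nth.
  by apply: mem_nth; rewrite Hk.
Qed.

Definition has_plegma k l N (A : {set {set 'I_N}}) : Prop :=
  exists f : seq {set 'I_N},
    size f = l /\ all (fun s => s \in A) f /\ plegma k (map (@incr N) f).

Lemma has_plegma0 k N (A : {set {set 'I_N}}) : has_plegma k 0 A.
Proof. by exists [::]. Qed.

Lemma has_plegmaS k l N (A A' : {set {set 'I_N}}) :
  A \subset A' -> has_plegma k l A -> has_plegma k l A'.
Proof.
move=> sAA' [f [Hsize [Hf Hpl]]]; exists f; split=> //; split=> //.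
by apply/allP => s Hs; apply: (subsetP sAA'); apply: (allP Hf).
Qed.

Lemma has_plegma_set0 l N (A : {set {set 'I_N}}) : set0 \in A -> has_plegma 0 l A.
Proof.
move=> HA; exists (nseq l set0); rewrite size_nseq map_nseq incr_set0.
split=> //; split; last exact: plegma0_nseq.
by apply/allP => s; rewrite mem_nseq => /andP[_ /eqP ->].
Qed.

Lemma has_plegma_prepend k l N (H : {set 'I_N}) (T A : {set {set 'I_N}}) :
  l <= #|H| -> has_plegma k l T ->
  (forall h t, h \in H -> t \in T -> h |: t \in A /\ forall y, y \in t -> h < y) ->
  has_plegma k.+1 l A.
Proof.
move=> HlH [g [Hg1 [Hg2 Hg3]]] HHT.
set hs := take l (sort (fun x y : 'I_N => x <= y) (enum H)).
have Ehs : map val hs = take l (incr H).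
  by rewrite /hs map_take /incr (@map_sort _ _ val (fun x y : 'I_N => x <= y) leq).
have Hhs h : h \in hs -> h \in H by move/mem_take; rewrite mem_sort mem_enum.
have Hsize : size hs = l by rewrite size_takel // size_sort -cardE.
have Hpair h t : h \in hs -> t \in g -> h |: t \in A /\ forall y, y \in t -> h < y.
  by move=> Hh Ht; apply: HHT (Hhs h Hh) (allP Hg2 t Ht).
exists [seq p.1 |: p.2 | p <- zip hs g]; split; [|split].
- by rewrite size_map size_zip Hsize Hg1 minnn.
- by apply/allP => s /mapP[[h t] /mem_zip[Hh Ht] ->]; case: (Hpair h t Hh Ht).
have -> : map (@incr N) [seq p.1 |: p.2 | p <- zip hs g] =
    [seq p.1 :: p.2 | p <- zip (map val hs) (map (@incr N) g)].
  elim: hs g Hpair {Hsize Hhs Ehs Hg1 Hg2 Hg3} => [|h hs IH] [|t g] //= Hpair.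
  rewrite incr_setU1; last by case: (Hpair h t); rewrite ?mem_head.
  by rewrite IH // => h' t' Hh' Ht'; apply: Hpair; rewrite in_cons ?Hh' ?Ht' orbT.
apply: plegma_zip_cons => //.
- by rewrite Ehs; apply/take_sorted/sorted_incr.
- by rewrite !size_map Hsize.
- move=> _ _ x /mapP[h Hh ->] /mapP[t Ht ->]; rewrite mem_incr.
  by case/exists_inP => y Hy /eqP <-; case: (Hpair h t Hh Ht) => _; apply.
Qed.

Lemma card_bigcup_le (I T : finType) (P : pred I) (F : I -> {set T}) :
  #|\bigcup_(i | P i) F i| <= \sum_(i | P i) #|F i|.
Proof.
apply: (big_ind2 (fun (X : {set T}) n => #|X| <= n)) => [|X1 n1 X2 n2 H1 H2|//].
  by rewrite cards0.
exact: leq_trans (leq_card_setU _ _) (leq_add H1 H2).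
Qed.

Lemma card_subsets_le (T : finType) (S : {set T}) j :
  #|[set e : {set T} | (e \subset S) && (#|e| == j)]| <= #|S| ^ j.
Proof.
elim: j => [|j IH].
  rewrite expn0 -(cards1 (set0 : {set T})); apply: subset_leq_card.
  by apply/subsetP => e; rewrite !inE => /andP[_ /eqP/cards0_eq ->].
set K := [set e : {set T} | (e \subset S) && (#|e| == j)].
apply: (@leq_trans #|setX S K|); last by rewrite cardsX expnS leq_mul2l IH orbT.
apply: leq_trans (leq_imset_card (fun p => p.1 |: p.2) _).
apply: subset_leq_card; apply/subsetP => e; rewrite inE => /andP[HS /eqP He].
have /card_gt0P[x Hx] : 0 < #|e| by rewrite He.
apply/imsetP; exists (x, e :\ x); last by rewrite /= setD1K.
rewrite !inE /= (subsetP HS _ Hx) (subset_trans (subsetDl _ _) HS).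
by rewrite /= -(eqn_add2l 1) !add1n -He (cardsD1 x e) Hx.
Qed.

Lemma pigeonhole_fiber (T U : finType) (S : {set T}) (F : T -> U) (R : {set U}) (u0 : U) :
  (forall x, x \in S -> F x \in R) ->
  exists u, #|S| <= #|R| * #|[set x in S | F x == u]|.
Proof.
move=> HF; have [S0|/card_gt0P[x Hx]] := posnP #|S|; first by exists u0; rewrite S0.
have HFS : 0 < #|F @: S| by apply/card_gt0P; exists (F x); apply: imset_f.
have [u _ Hmax] := eq_bigmax_cond (fun u => #|[set x in S | F x == u]|) HFS.
exists u; rewrite -sum1_card (partition_big_imset F).
apply: (@leq_trans (\sum_(j in F @: S) #|[set x in S | F x == u]|)).
  apply: leq_sum => j Hj; rewrite sum1_card -Hmax -cardsE.
  exact: (@leq_bigmax_cond _ (mem (F @: S)) (fun u => #|[set x in S | F x == u]|)).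
rewrite sum_nat_const leq_mul2r; apply/orP; right; apply: subset_leq_card.
by apply/subsetP => _ /imsetP[y Hy ->]; apply: HF.
Qed.

Lemma sum_le_threshold (I : finType) (K : {set I}) (f : I -> nat) l m :
  (forall i, f i <= m) ->
  \sum_(i in K) f i <= l * #|K| + m * #|[set i in K | l <= f i]|.
Proof.
move=> Hf; rewrite (bigID (fun i => l <= f i)) /= addnC; apply: leq_add.
  rewrite big_mkcondr /= mulnC -sum_nat_const; apply: leq_sum => i _.
  by case: (leqP l (f i)) => // /ltnW.
apply: (@leq_trans (\sum_(i in K | l <= f i) m)); first by apply: leq_sum.
by apply/eq_leq; rewrite mulnC -sum_nat_const; apply: eq_bigl => i; rewrite inE.
Qed.

Lemma leq_mul_of_exp x y D j : 0 < D -> x ^ j.+1 <= D * y ^ j.+1 -> x <= D * y.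
Proof.
move=> HD H; rewrite leqNgt; apply/negP => Hlt.
have : (D * y) ^ j.+1 < x ^ j.+1 by rewrite ltn_exp2r.
rewrite ltnNge => /negP; apply; apply: leq_trans H _.
by rewrite expnMn leq_mul2r -{1}(expn1 D) leq_pexp2l // orbT.
Qed.

Definition interval N a n : {set 'I_N} := [set x : 'I_N | a <= x < a + n].

Lemma card_interval_le N a n : #|interval N a n| <= n.
Proof.
rewrite cardE -(size_map val) -[leqRHS](size_iota a n); apply: uniq_leq_size.
  by rewrite (map_inj_uniq val_inj) enum_uniq.
by move=> _ /mapP[x + ->]; rewrite mem_enum inE mem_iota.
Qed.

Lemma subset_interval_tail N a n m (e : {set 'I_N}) :
  m <= n -> e \subset interval N a n -> e :&: interval N a m == set0 ->
  e \subset interval N (a + m) (n - m).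
Proof.
move=> Hmn /subsetP Hsub /eqP He0; apply/subsetP => x Hx.
have /andP[Hax Hxn] : a <= x < a + n by have := Hsub x Hx; rewrite inE.
have : x \notin e :&: interval N a m by rewrite He0 inE.
rewrite !inE Hx Hax /= -leqNgt => Hamx.
by apply/andP; split; lia.
Qed.

Definition link N (A : {set {set 'I_N}}) (B t : {set 'I_N}) : {set 'I_N} :=
  [set h in B | (h |: t \in A) && [forall y in t, h < y]].

Lemma card_meeting_le_sum_link N j a n m (A : {set {set 'I_N}}) :
  (forall e, e \in A -> #|e| = j.+1 /\ e \subset interval N a n) ->
  #|[set e in A | e :&: interval N a m != set0]| <=
  \sum_(t in [set t : {set 'I_N} | (t \subset interval N a n) && (#|t| == j)])
    #|link A (interval N a m) t|.
Proof.
move=> HA; set B := interval N a m.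
set K := [set t : {set 'I_N} | (t \subset _) && _].
apply: (@leq_trans #|\bigcup_(t in K) ((fun h => h |: t) @: link A B t)|).
  apply: subset_leq_card; apply/subsetP => e; rewrite inE => /andP[HeA].
  case/set0Pn => x0; rewrite inE => /andP[Hx0e Hx0B].
  have [Hc Hsub] := HA e HeA.
  have [h Hhe Hmin] := arg_minnP (fun h : 'I_N => val h) Hx0e.
  have {}Hhe : h \in e := Hhe.
  apply/bigcupP; exists (e :\ h).
    rewrite inE (subset_trans (subsetDl _ _) Hsub).
    by rewrite /= -(eqn_add2l 1) !add1n -Hc (cardsD1 h e) Hhe.
  apply/imsetP; exists h; last by rewrite setD1K.
  rewrite !inE setD1K // HeA /=; apply/andP; split.
    have := subsetP Hsub h Hhe; move: Hx0B (Hmin _ Hx0e); rewrite !inE.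
    by move=> /andP[_ Hx0] Hhx0 /andP[-> _]; apply: leq_ltn_trans Hhx0 Hx0.
  apply/forall_inP => y; rewrite inE => /andP[Hyh Hye].
  rewrite ltn_neqAle (Hmin _ Hye) andbT; apply: contra Hyh => /eqP E.
  by rewrite (val_inj E) set11.
apply: leq_trans (card_bigcup_le _ _) _.
by apply: leq_sum => t _; apply: leq_imset_card.
Qed.

(* The scale [W] stays fixed when [dense_plegmaS] recurses to shorter
   intervals; this is why the threshold is [W^k n / D] and not [n^(k+1) / D]. *)
Definition dense_plegma k : Prop :=
  forall D l, exists W0, forall W, W0 <= W ->
  forall N a n (A : {set {set 'I_N}}), n <= W <= D * n ->
  (forall e, e \in A -> #|e| = k.+1 /\ e \subset interval N a n) ->
  W ^ k * n <= D * #|A| -> has_plegma k.+1 l A.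

Lemma dense_plegma0 : dense_plegma 0.
Proof.
move=> D l; exists (D * D * l).+1 => W HW N a n A /andP[_ HWn] HA Hden.
rewrite expn0 mul1n in Hden.
set H := [set x : 'I_N | [set x] \in A].
have HAH : #|A| <= #|H|.
  apply: leq_trans (leq_imset_card (fun x => [set x]) H).
  apply: subset_leq_card; apply/subsetP => e He.
  have /cards1P[x Hx] : #|e| == 1 by rewrite (HA e He).1.
  by apply/imsetP; exists x => //; rewrite inE -Hx.
have HlH : l <= #|H|.
  have : D * D * l < D * D * #|A|.
    apply: leq_trans HW (leq_trans HWn _).
    by rewrite -mulnA leq_mul2l Hden orbT.
  by rewrite ltn_mul2l => /andP[_ /ltnW Hl]; apply: leq_trans Hl HAH.
apply: (has_plegma_prepend HlH (has_plegma_set0 l (set11 set0))).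
move=> h t; rewrite !inE => Hh /eqP ->; rewrite setU0; split=> // y.
by rewrite inE.
Qed.

Lemma has_plegma_front k D l W N a n (A : {set {set 'I_N}}) :
  0 < D -> 0 < W -> n <= W ->
  (forall T : {set {set 'I_N}},
     (forall t, t \in T -> #|t| = k.+1 /\ t \subset interval N a n) ->
     W ^ k * n <= 2 ^ (2 * D * l) * (2 * D) * #|T| -> has_plegma k.+1 l T) ->
  (forall e, e \in A -> #|e| = k.+2 /\ e \subset interval N a n) ->
  2 * D * l * W ^ k.+1 <=
    D * #|[set e in A | e :&: interval N a (2 * D * l) != set0]| ->
  has_plegma k.+2 l A.
Proof.
move=> HD HW Hn IH HA Hfront.
have [->|Hl] := posnP l; first exact: has_plegma0.
set m := 2 * D * l in IH Hfront; set B := interval N a m.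
set K := [set t : {set 'I_N} | (t \subset interval N a n) && (#|t| == k.+1)].
set good := [set t in K | l <= #|link A B t|].
have HK : #|K| <= W ^ k.+1.
  apply: leq_trans (card_subsets_le _ _) _; rewrite leq_exp2r //.
  exact: leq_trans (card_interval_le _ _ _) Hn.
have link_sub t : link A B t \subset B.
  by apply/subsetP => h; rewrite inE => /andP[].
have Hgood : W ^ k.+1 <= 2 * D * #|good|.
  have Hlink t : #|link A B t| <= m.
    exact: leq_trans (subset_leq_card (link_sub t)) (card_interval_le _ _ _).
  have Hsum := leq_trans (card_meeting_le_sum_link m HA) (sum_le_threshold K l Hlink).
  have : D * l * W ^ k.+1 <= D * l * (2 * D * #|good|).
    move: (leq_trans Hfront (leq_mul (leqnn D) Hsum)) (leq_mul (leqnn (D * l)) HK).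
    rewrite /m -/good; lia.
  by rewrite leq_pmul2l ?muln_gt0 ?HD.
have [H HH] : exists H, #|good| <= #|powerset B| * #|[set t in good | link A B t == H]|.
  by apply: (pigeonhole_fiber set0) => t _; rewrite powersetE.
set T := [set t in good | _] in HH.
have HT : W ^ k.+1 <= 2 ^ m * (2 * D) * #|T|.
  rewrite mulnAC mulnC; apply: leq_trans Hgood _; rewrite leq_mul2l.
  apply/orP; right; apply: leq_trans HH _; rewrite leq_mul2r card_powerset.
  by rewrite leq_exp2l ?card_interval_le ?orbT.
have /card_gt0P[t0 Ht0] : 0 < #|T|.
  by rewrite lt0n; apply: contraTneq HT => ->; rewrite muln0 -ltnNge expn_gt0 HW.
apply: (has_plegma_prepend (H := H) (T := T)).
- by move: Ht0; rewrite !inE => /andP[/andP[_ +] /eqP <-].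
- apply: IH; last by apply: leq_trans HT; rewrite expnSr leq_mul2l Hn orbT.
  by move=> t; rewrite !inE => /andP[/andP[/andP[Ht /eqP Hc] _] _].
move=> h t Hh; rewrite inE => /andP[_ /eqP Ht]; move: Hh.
by rewrite -Ht inE => /and3P[_ HhA /forall_inP Hlt].
Qed.

Lemma dense_tail k D W N a n m (A : {set {set 'I_N}}) :
  0 < D -> m < n ->
  (forall e, e \in A -> #|e| = k.+2 /\ e \subset interval N a n) ->
  W ^ k.+1 * n <= D * #|A| ->
  D * #|[set e in A | e :&: interval N a m != set0]| < m * W ^ k.+1 ->
  let A' := [set e in A | e :&: interval N a m == set0] in
  [/\ forall e, e \in A' -> #|e| = k.+2 /\ e \subset interval N (a + m) (n - m),
      W ^ k.+1 * (n - m) <= D * #|A'| & W <= D * (n - m)].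
Proof.
move=> HD Hmn HA Hden Hfew A'.
have HA' e : e \in A' -> #|e| = k.+2 /\ e \subset interval N (a + m) (n - m).
  rewrite inE => /andP[He He0]; have [Hc Hsub] := HA e He.
  by split=> //; apply: subset_interval_tail (ltnW Hmn) Hsub He0.
have Hsplit : #|[set e in A | e :&: interval N a m != set0]| + #|A'| = #|A|.
  rewrite -(cardsID [set e | e :&: interval N a m != set0] A).
  by congr (_ + _); apply: eq_card => e; rewrite !inE ?negbK andbC.
have Hden' : W ^ k.+1 * (n - m) <= D * #|A'|.
  by move: Hden Hfew; rewrite mulnBr -Hsplit; lia.
split=> //; apply: (leq_mul_of_exp (j := k)) HD _.
rewrite -(@leq_pmul2r (n - m)) ?subn_gt0 // -mulnA -expnSr.
apply: leq_trans Hden' _; rewrite leq_mul2l; apply/orP; right.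
set S := interval N (a + m) (n - m).
apply: (@leq_trans #|[set e : {set 'I_N} | (e \subset S) && (#|e| == k.+2)]|).
  by apply: subset_leq_card; apply/subsetP => e /HA'[Hc Hsub]; rewrite inE Hsub Hc /=.
by apply: leq_trans (card_subsets_le _ _) _; rewrite leq_exp2r // card_interval_le.
Qed.

Lemma dense_plegmaS k : dense_plegma k -> dense_plegma k.+1.
Proof.
move=> IH D [|l]; first by exists 0 => *; apply: has_plegma0.
set m := 2 * D * l.+1; have [W1 HW1] := IH (2 ^ m * (2 * D)) l.+1.
exists (maxn W1 (D * m).+1) => W; rewrite geq_max => /andP[HW1W HWm] N a n.
elim/ltn_ind: n a => n IHn a A /andP[Hn HWn] HA Hden.
have HW : 0 < W := leq_trans (ltn0Sn _) HWm.
have HD : 0 < D.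
  by move: HWn; rewrite lt0n; apply: contraTneq => ->; rewrite mul0n -ltnNge.
have Hmn : m < n by rewrite -(ltn_pmul2l HD); apply: leq_trans HWm HWn.
have [Hfront|Hfew] :=
  leqP (m * W ^ k.+1) (D * #|[set e in A | e :&: interval N a m != set0]|).
  apply: (has_plegma_front HD HW Hn _ HA Hfront) => T HT HTden.
  apply: (HW1 W HW1W N a n T) => //.
  rewrite Hn (leq_trans HWn) // leq_mul2r -{1}(mul1n D).
  by rewrite leq_mul ?expn_gt0 ?leq_pmull ?orbT.
have [HA' Hden' HW'] := dense_tail HD Hmn HA Hden Hfew.
have Hm : 0 < m by rewrite !muln_gt0 HD.
have /has_plegmaS : [set e in A | e :&: interval N a m == set0] \subset A.
  by apply/subsetP => e; rewrite inE => /andP[].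
apply; apply: (IHn (n - m) _ (a + m) _ _ HA' Hden').
  by rewrite ltn_subrL Hm (ltn_trans Hm Hmn).
by rewrite HW' andbT (leq_trans (leq_subr _ _) Hn).
Qed.

Lemma dense_plegma_all k : dense_plegma k.
Proof. by elim: k => [|k]; [apply: dense_plegma0 | apply: dense_plegmaS]. Qed.

Lemma expn_le_ffact k n : 2 * k <= n -> n ^ k <= 2 ^ k * n ^_ k.
Proof.
elim: k => [|k IH] Hk; first by rewrite ffactn0.
have Hnk : n <= 2 * (n - k) by lia.
rewrite ffactnSr expnSr.
have -> : 2 ^ k.+1 * (n ^_ k * (n - k)) = 2 ^ k * n ^_ k * (2 * (n - k)).
  by rewrite expnS; lia.
by apply: leq_mul; first by apply: IH; lia.
Qed.

Lemma expn_le_binomial k n : 2 * k <= n -> n ^ k <= 2 ^ k * k`! * 'C(n, k).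
Proof. by move=> Hk; rewrite -mulnA [k`! * _]mulnC bin_ffact expn_le_ffact. Qed.

Lemma nat_density (delta : R) (D c a : nat) :
  Rlt (Rinv (INR D)) delta -> (0 < D)%coq_nat ->
  Rle (Rmult delta (INR c)) (INR a) -> c <= D * a.
Proof.
move=> H1 H2 H3.
have HD : Rlt 0 (INR D) by apply: lt_0_INR.
apply/leP; apply: INR_le; rewrite mult_INR.
have H4 : Rle (Rmult (Rinv (INR D)) (INR c)) (INR a).
  apply: Rle_trans H3; apply: Rmult_le_compat_r (Rlt_le _ _ H1); exact: pos_INR.
have := Rmult_le_compat_l (INR D) _ _ (Rlt_le _ _ HD) H4.
by rewrite -Rmult_assoc Rinv_r ?Rmult_1_l //; apply: not_0_INR; lia.
Qed.

Theorem mainTheorem13 (delta : R) (k l : nat) :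
  Rlt 0 delta ->
  exists n0 : nat, forall n : nat, n0 <= n ->
    forall A : {set {set 'I_n.+1}},
      (forall s, s \in A -> #|s| = k /\ ord0 \notin s) ->
      Rle (Rmult delta (INR 'C(n, k))) (INR #|A|) ->
      exists f : seq {set 'I_n.+1},
        size f = l /\ all (fun s => s \in A) f /\ plegma k (map (@incr n.+1) f).
Proof.
move=> Hdelta; have [D [HD HD0]] := archimed_cor1 delta Hdelta.
have HDpos : 0 < D by apply/ltP.
case: k => [|k].
  exists 0 => n _ A HA Hden; apply: has_plegma_set0.
  have /card_gt0P[e He] : 0 < #|A|.
    by have := nat_density HD HD0 Hden; rewrite bin0 muln_gt0 => /andP[].
  by have [/cards0_eq <- _] := HA e He.
have [W0 HW0] := dense_plegma_all k (2 ^ k.+1 * k.+1`! * D) l.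
exists (maxn W0 (2 * k.+1)) => n; rewrite geq_max => /andP[HW0n Hkn] A HA Hden.
apply: (HW0 n HW0n n.+1 1 n A).
- by rewrite leqnn leq_pmull // !muln_gt0 expn_gt0 fact_gt0 HDpos.
- move=> e /HA[Hc He0]; split=> //; apply/subsetP => x Hx.
  rewrite inE ltn_ord andbT lt0n.
  by apply: contraNneq He0 => x0; rewrite (_ : ord0 = x) //; apply: val_inj.
rewrite -expnSr -mulnA; apply: leq_trans (expn_le_binomial Hkn) _.
by rewrite leq_mul2l (nat_density HD HD0 Hden) orbT.
Qed.
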